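(* For $\omega>0$ small, there exist smooth functions $K_2,K_1,K_0$ on $\mathbb{R}$ such that, with \[ K=\partial_y^4-2\partial_y^2+K_2\partial_y^2+K_1\partial_y+K_0+1, \] one has the operator identity $U M_+M_-=KU$, and for all $k\ge0$, on $\mathbb{R}$, \[ |\partial_y^kK_2|+|\partial_y^kK_1|+|\partial_y^kK_0|\lesssim \omega e^{-(\kappa-\alpha)|y|}. \]
   Context: For $\omega\ge0$, $Q_\omega(y)=\sqrt{4/(1+a_\omega\cosh 2y)}$, $a_\omega=\sqrt{1+\tfrac{16}{3}\omega}$, and $M_+=-\partial_y^2+1+\tfrac{\omega}{3}Q_\omega^4$, $M_-=-\partial_y^2+1-\omega Q_\omega^4$. For $\omega\in(0,\omega_1)$ ($\omega_1>0$ small), $\alpha=\alpha(\omega)>0$ is smooth with $\alpha=\tfrac89\omega+O(\omega^2)$, $\lambda=1-\alpha^2$, $\kappa=\sqrt{2-\alpha^2}$, and $W_1,W_2$ are smooth real functions of $(\omega,y)$, even in $y$, satisfying $M_+W_1=\lambda W_2$, $M_-W_2=\lambda W_1$ and, for $j=1,2$, all $k\ge0$, on $\mathbb{R}$: $|\partial_y^kW_j|\lesssim\omega^ke^{-\alpha|y|}+\omega e^{-|y|}$, $|\partial_y^k(W_1-W_2)|\lesssim\omega e^{-\kappa|y|}$, $|W_j-e^{-\alpha|y|}|\lesssim\omega e^{-\alpha|y|}$ (these are the internal-mode eigenfunctions of the transformed linearized problem of the cubic-quintic NLS around $Q_\omega$). In particular $W_2>0$; set $U=\partial_y-W_2'/W_2$.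 The notation $\lesssim$ means $\le C\,\cdot$ with $C$ independent of $\omega$ and $y$ (possibly depending on $k$). *)

From Stdlib Require Import Reals Lra List.
From Coquelicot Require Import Coquelicot.
Open Scope R_scope.

Definition smooth (f : R -> R) : Prop :=
  forall (n : nat) (x : R), ex_derive (Derive_n f n) x.

(** Iterated partial derivatives of g : R -> R -> R (variables (w, y)):
    true = derivative in w, false = derivative in y; applied right to left. *)
Fixpoint pder (l : list bool) (g : R -> R -> R) : R -> R -> R :=
  match l with
  | nil => g
  | b :: l' =>
      let h := pder l' g in
      if b then (fun w y => Derive (fun w' => h w' y) w)
      else (fun w y => Derive (fun y' => h w y') y)
  end.

Definition smooth2_on (w1 : R) (g : R -> R -> R) : Prop :=
  forall (l : list bool) (w y : R), 0 < w < w1 ->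
    ex_derive (fun w' => pder l g w' y) w /\
    ex_derive (fun y' => pder l g w y') y /\
    continuity_2d_pt (pder l g) w y.

Definition smooth_on_interval (w1 : R) (g : R -> R) : Prop :=
  forall (n : nat) (w : R), 0 < w < w1 -> ex_derive (Derive_n g n) w.

Definition a_om (w : R) : R := sqrt (1 + 16 / 3 * w).
Definition Q (w y : R) : R := sqrt (4 / (1 + a_om w * cosh (2 * y))).

Definition Mp_op (w : R) (f : R -> R) : R -> R :=
  fun y => - Derive_n f 2 y + f y + w / 3 * (Q w y) ^ 4 * f y.
Definition Mm_op (w : R) (f : R -> R) : R -> R :=
  fun y => - Derive_n f 2 y + f y - w * (Q w y) ^ 4 * f y.

Definition Uop (W2 : R -> R) (f : R -> R) : R -> R :=
  fun y => Derive f y - (Derive W2 y / W2 y) * f y.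

Definition Kop (K2 K1 K0 : R -> R) (f : R -> R) : R -> R :=
  fun y => Derive_n f 4 y - 2 * Derive_n f 2 y + K2 y * Derive_n f 2 y
           + K1 y * Derive f y + K0 y * f y + f y.

(* Write [g = W2' / W2], so that [U = d/dy - g].  For any [K2, K1, K0] the operator
   [U M+ M- - K U] has order at most four; a suitable choice of [K2, K1, K0] (polynomials
   in [w Q^4], [g] and their derivatives) kills the terms in [f', ..., f^(4)], leaving
   multiplication by an explicit function [c].  Since [U W2 = 0] and
   [M+ M- W2 = lambda^2 W2], applying the identity to [W2 > 0] gives [c = 0].

   For the bounds, [w Q^4 = O(w exp (-4 |y|))], and [g] obeys the Riccati equation
   [g' = alpha^2 - g^2 + h], where [h = - lambda (W1 - W2) / W2 - w Q^4] is
   [O(w exp (-(kappa - alpha) |y|))].  The key point is that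
   [alpha^2 - g^2 = (alpha + g) (alpha - g)] is of the same size: since
   [W2'' - alpha^2 W2 = O(w exp (-kappa |y|))], a comparison argument for the decaying
   mode of [- d^2 + alpha^2] gives [W2' + sgn(y) alpha W2 = O(w exp (-kappa |y|))], and
   dividing by [W2 ~ exp (-alpha |y|)] gives [g + sgn(y) alpha = O(w exp (-(kappa - alpha) |y|))].
   Higher derivatives of [g'] follow by differentiating the Riccati equation. *)

From Stdlib Require Import Reals Lra Lia FunctionalExtensionality ClassicalEpsilon List.
From Coquelicot Require Import Coquelicot.
Open Scope R_scope.

Ltac eta_contract :=
  repeat match goal with |- context [fun x => ?f x] => change (fun x => f x) with f end.

Lemma smooth_ex_derive f x : smooth f -> ex_derive f x.
Proof. intros H. exact (H 0%nat x). Qed.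

Lemma smooth_ex_derive_n f k x : smooth f -> ex_derive_n f k x.
Proof. intros H; destruct k; simpl; [exact I | apply H]. Qed.

Lemma smooth_locally_ex_derive_n f n x : smooth f ->
  locally x (fun y => forall k, (k <= n)%nat -> ex_derive_n f k y).
Proof. intros H. apply filter_forall. intros y k _. now apply smooth_ex_derive_n. Qed.

Lemma Derive_n_S_Derive f n x : Derive_n f (S n) x = Derive_n (Derive f) n x.
Proof. replace (S n) with (n + 1)%nat by lia. now rewrite <- Derive_n_comp. Qed.

Lemma smooth_ext f g : (forall x, f x = g x) -> smooth f -> smooth g.
Proof.
  intros E H n x. apply ex_derive_ext with (Derive_n f n); [|apply H].
  intro t. now apply Derive_n_ext.
Qed.

Lemma smooth_Derive f : smooth f -> smooth (Derive f).
Proof.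
  intros H n x. apply ex_derive_ext with (Derive_n f (S n)); [|apply H].
  intro t. apply Derive_n_S_Derive.
Qed.

Lemma smooth_Derive_n f m : smooth f -> smooth (Derive_n f m).
Proof. intros H; induction m; [exact H | now apply smooth_Derive]. Qed.

Lemma smooth_const c : smooth (fun _ => c).
Proof. intros n x. exact (ex_derive_n_const c (S n) x). Qed.

Lemma smooth_Derive_n_plus f g n x : smooth f -> smooth g ->
  Derive_n (fun y => f y + g y) n x = Derive_n f n x + Derive_n g n x.
Proof. intros. apply Derive_n_plus; now apply smooth_locally_ex_derive_n. Qed.

(* Sums and products of smooth functions and of [/ h] form a class closed under
   [Derive]; one induction then gives smoothness of products and quotients. *)
Inductive smooth_over_inv (h : R -> R) : (R -> R) -> Prop :=
| smooth_over_inv_smooth f : smooth f -> smooth_over_inv h f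
| smooth_over_inv_inv : smooth_over_inv h (fun x => / h x)
| smooth_over_inv_plus f g : smooth_over_inv h f -> smooth_over_inv h g ->
    smooth_over_inv h (fun x => f x + g x)
| smooth_over_inv_mult f g : smooth_over_inv h f -> smooth_over_inv h g ->
    smooth_over_inv h (fun x => f x * g x)
| smooth_over_inv_ext f g : (forall x, f x = g x) -> smooth_over_inv h f ->
    smooth_over_inv h g.

Section SmoothOverInv.
Variable h : R -> R.
Hypotheses (h_smooth : smooth h) (h_neq0 : forall x, h x <> 0).

Lemma smooth_over_inv_Derive f : smooth_over_inv h f ->
  (forall x, ex_derive f x) /\ smooth_over_inv h (Derive f).
Proof.
  induction 1 as [f Hf| |f g _ [Ef Df] _ [Eg Dg]|f g Hf [Ef Df] Hg [Eg Dg]|f g Efg _ [Ef Df]].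
  - split; [intro; now apply smooth_ex_derive|].
    now apply smooth_over_inv_smooth, smooth_Derive.
  - assert (Hinv : forall x, is_derive (fun x => / h x) x (- Derive h x / h x ^ 2)).
    { intro x. exact (is_derive_inv h x _
        (Derive_correct _ _ (smooth_ex_derive h x h_smooth)) (h_neq0 x)). }
    split; [intro x; eexists; apply Hinv|].
    apply smooth_over_inv_ext with (fun x => (-1 * Derive h x) * (/ h x * / h x)).
    + intro x. symmetry. apply is_derive_unique.
      replace (-1 * Derive h x * (/ h x * / h x)) with (- Derive h x / h x ^ 2)
        by (field; apply h_neq0).
      apply Hinv.
    + repeat apply smooth_over_inv_mult; try apply smooth_over_inv_inv.
      * apply smooth_over_inv_smooth, smooth_const.
      * now apply smooth_over_inv_smooth, smooth_Derive.
  - split; [intro x; auto_derive; repeat split; eta_contract; auto|].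
    apply smooth_over_inv_ext with (fun x => Derive f x + Derive g x).
    + intro x. now rewrite Derive_plus.
    + now apply smooth_over_inv_plus.
  - split; [intro x; auto_derive; repeat split; eta_contract; auto|].
    apply smooth_over_inv_ext with (fun x => Derive f x * g x + f x * Derive g x).
    + intro x. now rewrite Derive_mult.
    + apply smooth_over_inv_plus; apply smooth_over_inv_mult; auto.
  - split; [intro x; now apply ex_derive_ext with f|].
    apply smooth_over_inv_ext with (Derive f); auto.
    intro x. now apply Derive_ext.
Qed.

Lemma smooth_of_smooth_over_inv f : smooth_over_inv h f -> smooth f.
Proof.
  intros G.
  assert (Gn : forall n, smooth_over_inv h (Derive_n f n)).
  { induction n; [exact G | exact (proj2 (smooth_over_inv_Derive _ IHn))]. }
  intros n x. exact (proj1 (smooth_over_inv_Derive _ (Gn n)) x).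
Qed.

End SmoothOverInv.

Lemma smooth_inv h : smooth h -> (forall x, h x <> 0) -> smooth (fun x => / h x).
Proof. intros. apply (smooth_of_smooth_over_inv h); auto. apply smooth_over_inv_inv. Qed.

Lemma smooth_mult f g : smooth f -> smooth g -> smooth (fun x => f x * g x).
Proof.
  intros. apply (smooth_of_smooth_over_inv (fun _ => 1)); [apply smooth_const|intros; lra|].
  apply smooth_over_inv_mult; now apply smooth_over_inv_smooth.
Qed.

Lemma smooth_plus f g : smooth f -> smooth g -> smooth (fun x => f x + g x).
Proof.
  intros. apply (smooth_of_smooth_over_inv (fun _ => 1)); [apply smooth_const|intros; lra|].
  apply smooth_over_inv_plus; now apply smooth_over_inv_smooth.
Qed.

Lemma smooth_scal c f : smooth f -> smooth (fun x => c * f x).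
Proof. intros. apply smooth_mult; auto using smooth_const. Qed.

Lemma smooth_minus f g : smooth f -> smooth g -> smooth (fun x => f x - g x).
Proof.
  intros. apply smooth_ext with (fun x => f x + -1 * g x); [intro; ring|].
  now apply smooth_plus, smooth_scal.
Qed.

Lemma Derive_n_exp n x : Derive_n exp n x = exp x.
Proof.
  revert x; induction n as [|n IH]; intro x; [reflexivity|].
  simpl. rewrite (Derive_ext _ exp x IH). apply is_derive_unique, is_derive_exp.
Qed.

Lemma smooth_exp : smooth exp.
Proof.
  intros n x. apply ex_derive_ext with exp; [intro; symmetry; apply Derive_n_exp|].
  eexists; apply is_derive_exp.
Qed.

Lemma Derive_n_exp_scal c n x : Derive_n (fun y => exp (c * y)) n x = c ^ n * exp (c * x).
Proof.
  rewrite Derive_n_comp_scal, Derive_n_exp; [reflexivity|].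
  apply smooth_locally_ex_derive_n, smooth_exp.
Qed.

Lemma smooth_exp_scal c : smooth (fun y => exp (c * y)).
Proof.
  intros n x. apply ex_derive_ext with (fun y => c ^ n * exp (c * y)).
  - intro; symmetry; apply Derive_n_exp_scal.
  - auto_derive; auto.
Qed.

Lemma smooth_Derive_n_mult_S f g n x : smooth f -> smooth g ->
  Derive_n (fun y => f y * g y) (S n) x =
  Derive_n (fun y => Derive f y * g y) n x + Derive_n (fun y => f y * Derive g y) n x.
Proof.
  intros Hf Hg. rewrite Derive_n_S_Derive, <- smooth_Derive_n_plus.
  - apply Derive_n_ext. intro t. apply Derive_mult; now apply smooth_ex_derive.
  - apply smooth_mult; auto using smooth_Derive.
  - apply smooth_mult; auto using smooth_Derive.
Qed.

Section Families.
Variable D : R -> Prop.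

Definition smooth_family (F : R -> R -> R) := forall w, D w -> smooth (F w).

Definition dominated_upto (F e : R -> R -> R) (k : nat) :=
  forall j, (j <= k)%nat -> exists C, forall w y, D w ->
    Rabs (Derive_n (F w) j y) <= C * e w y.

Definition dominated (F e : R -> R -> R) :=
  forall k, exists C, forall w y, D w -> Rabs (Derive_n (F w) k y) <= C * e w y.

Definition nonneg_on (e : R -> R -> R) := forall w y, D w -> 0 <= e w y.

Lemma smooth_family_const (s : R -> R) : smooth_family (fun w _ => s w).
Proof. intros w _. apply smooth_const. Qed.

Lemma smooth_family_plus F G : smooth_family F -> smooth_family G ->
  smooth_family (fun w y => F w y + G w y).
Proof. intros HF HG w Dw. apply smooth_plus; auto. Qed.

Lemma smooth_family_mult F G : smooth_family F -> smooth_family G ->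
  smooth_family (fun w y => F w y * G w y).
Proof. intros HF HG w Dw. apply smooth_mult; auto. Qed.

Lemma smooth_family_scal s F : smooth_family F -> smooth_family (fun w y => s w * F w y).
Proof. intros HF w Dw. apply smooth_scal; auto. Qed.

Lemma smooth_family_Derive_n F m : smooth_family F ->
  smooth_family (fun w => Derive_n (F w) m).
Proof. intros HF w Dw. apply smooth_Derive_n; auto. Qed.

Lemma dominated_dominated_upto F e k : dominated F e -> dominated_upto F e k.
Proof. intros H j _. apply H. Qed.

Lemma dominated_upto_Derive F e k : dominated_upto F e (S k) ->
  dominated_upto (fun w => Derive (F w)) e k.
Proof.
  intros H j Hj. destruct (H (S j)) as [C HC]; [lia|].
  exists C. intros w y Dw. rewrite <- Derive_n_S_Derive. auto.
Qed.

Lemma dominated_upto_le F e k m : (m <= k)%nat -> dominated_upto F e k ->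
  dominated_upto F e m.
Proof. intros Hm H j Hj. apply H. lia. Qed.

Lemma Rabs_le_Rabs_const x C e : 0 <= e -> Rabs x <= C * e -> Rabs x <= Rabs C * e.
Proof.
  intros He H. apply Rle_trans with (1 := H).
  apply Rmult_le_compat_r; [exact He | apply Rle_abs].
Qed.

Lemma dominated_upto_mult e1 e2 k : nonneg_on e1 -> nonneg_on e2 -> forall F G,
  smooth_family F -> smooth_family G -> dominated_upto F e1 k -> dominated_upto G e2 k ->
  exists C, forall w y, D w ->
    Rabs (Derive_n (fun y => F w y * G w y) k y) <= C * (e1 w y * e2 w y).
Proof.
  intros N1 N2. induction k as [|k IH]; intros F G SF SG BF BG.
  - destruct (BF 0%nat) as [C1 H1]; [lia|]. destruct (BG 0%nat) as [C2 H2]; [lia|].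
    exists (Rabs C1 * Rabs C2). intros w y Dw. simpl.
    specialize (H1 w y Dw). specialize (H2 w y Dw). simpl in H1, H2.
    apply Rabs_le_Rabs_const in H1; [|now apply N1].
    apply Rabs_le_Rabs_const in H2; [|now apply N2].
    rewrite Rabs_mult.
    replace (Rabs C1 * Rabs C2 * (e1 w y * e2 w y))
      with ((Rabs C1 * e1 w y) * (Rabs C2 * e2 w y)) by ring.
    apply Rmult_le_compat; auto using Rabs_pos.
  - destruct (IH (fun w => Derive (F w)) G) as [Ca Ha].
    + intros w Dw. apply smooth_Derive; auto.
    + exact SG.
    + now apply dominated_upto_Derive.
    + apply dominated_upto_le with (S k); auto.
    + destruct (IH F (fun w => Derive (G w))) as [Cb Hb].
      * exact SF.
      * intros w Dw. apply smooth_Derive; auto.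
      * apply dominated_upto_le with (S k); auto.
      * now apply dominated_upto_Derive.
      * exists (Ca + Cb). intros w y Dw.
        rewrite smooth_Derive_n_mult_S by auto.
        eapply Rle_trans; [apply Rabs_triang|]. rewrite Rmult_plus_distr_r.
        apply Rplus_le_compat; auto.
Qed.

Lemma dominated_mult e1 e2 F G : nonneg_on e1 -> nonneg_on e2 ->
  smooth_family F -> smooth_family G -> dominated F e1 -> dominated G e2 ->
  dominated (fun w y => F w y * G w y) (fun w y => e1 w y * e2 w y).
Proof. intros. intro k. apply dominated_upto_mult; auto using dominated_dominated_upto. Qed.

Lemma dominated_plus e F G : smooth_family F -> smooth_family G ->
  dominated F e -> dominated G e -> dominated (fun w y => F w y + G w y) e.
Proof.
  intros SF SG BF BG k. destruct (BF k) as [C1 H1]. destruct (BG k) as [C2 H2].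
  exists (C1 + C2). intros w y Dw. rewrite smooth_Derive_n_plus by auto.
  eapply Rle_trans; [apply Rabs_triang|]. rewrite Rmult_plus_distr_r.
  apply Rplus_le_compat; auto.
Qed.

Lemma dominated_weaken e1 e2 F c : nonneg_on e1 ->
  (forall w y, D w -> e1 w y <= c * e2 w y) -> dominated F e1 -> dominated F e2.
Proof.
  intros N H B k. destruct (B k) as [C HC]. exists (Rabs C * c). intros w y Dw.
  apply Rle_trans with (Rabs C * e1 w y).
  - apply Rabs_le_Rabs_const; auto.
  - rewrite Rmult_assoc. apply Rmult_le_compat_l; auto using Rabs_pos.
Qed.

Lemma dominated_scal_bounded e F s M : nonneg_on e -> (forall w, D w -> Rabs (s w) <= M) ->
  dominated F e -> dominated (fun w y => s w * F w y) e.
Proof.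
  intros N Hs B k. destruct (B k) as [C HC]. exists (M * Rabs C). intros w y Dw.
  rewrite Derive_n_scal_l, Rabs_mult, Rmult_assoc.
  apply Rmult_le_compat; auto using Rabs_pos, Rabs_le_Rabs_const.
Qed.

Lemma dominated_scal c e F : nonneg_on e -> dominated F e ->
  dominated (fun w y => c * F w y) e.
Proof. intros N B. apply dominated_scal_bounded with (Rabs c); auto. intros; lra. Qed.

Lemma dominated_scal_weight e F s : nonneg_on e -> dominated F e ->
  dominated (fun w y => s w * F w y) (fun w y => Rabs (s w) * e w y).
Proof.
  intros N B k. destruct (B k) as [C HC]. exists (Rabs C). intros w y Dw.
  rewrite Derive_n_scal_l, Rabs_mult.
  replace (Rabs C * (Rabs (s w) * e w y)) with (Rabs (s w) * (Rabs C * e w y)) by ring.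
  apply Rmult_le_compat_l; auto using Rabs_pos, Rabs_le_Rabs_const.
Qed.

Lemma dominated_Derive_n e F m : dominated F e -> dominated (fun w => Derive_n (F w) m) e.
Proof.
  intros B k. destruct (B (k + m)%nat) as [C HC]. exists C. intros w y Dw.
  rewrite Derive_n_comp. auto.
Qed.

Lemma dominated_ext e F G : (forall w y, D w -> F w y = G w y) ->
  dominated F e -> dominated G e.
Proof.
  intros E B k. destruct (B k) as [C HC]. exists C. intros w y Dw.
  rewrite <- (Derive_n_ext (F w)); auto.
Qed.

Lemma dominated_const c : dominated (fun _ _ => c) (fun _ _ => 1).
Proof.
  intros [|k].
  - exists (Rabs c). intros. simpl. lra.
  - exists 0. intros. rewrite Derive_n_const, Rabs_R0. lra.
Qed.

Lemma dominated_mult_small e1 e F G : nonneg_on e1 -> nonneg_on e ->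
  (forall w y, D w -> e1 w y <= 1) ->
  smooth_family F -> smooth_family G -> dominated F e1 -> dominated G e ->
  dominated (fun w y => F w y * G w y) e.
Proof.
  intros N1 N H1 SF SG BF BG.
  apply (dominated_weaken (fun w y => e1 w y * e w y) e _ 1).
  - intros w y Dw. apply Rmult_le_pos; auto.
  - intros w y Dw. specialize (N w y Dw). specialize (H1 w y Dw). nra.
  - apply dominated_mult; auto.
Qed.

Lemma dominated_0 F e : dominated F e ->
  exists C, forall w y, D w -> Rabs (F w y) <= C * e w y.
Proof. intros B. exact (B 0%nat). Qed.

Lemma dominated_choice F e : dominated F e ->
  exists C : nat -> R, forall k w y, D w -> Rabs (Derive_n (F w) k y) <= C k * e w y.
Proof.
  intros B. exists (fun k => proj1_sig (constructive_indefinite_description _ (B k))).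
  intros k. exact (proj2_sig (constructive_indefinite_description _ (B k))).
Qed.

Lemma Derive_inv_pow F n y : smooth F -> F y <> 0 ->
  Derive (fun y => / F y ^ S n) y = - INR (S n) * (Derive F y * / F y ^ S (S n)).
Proof.
  intros HF Hn.
  assert (H1 := is_derive_pow F (S n) y _ (Derive_correct _ _ (smooth_ex_derive F y HF))).
  assert (H2 := is_derive_inv (fun y => F y ^ S n) y _ H1 (pow_nonzero _ _ Hn)).
  rewrite (is_derive_unique _ _ _ H2). simpl. field. split; auto. apply pow_nonzero; auto.
Qed.

Lemma smooth_inv_pow F n : smooth F -> (forall x, F x <> 0) -> smooth (fun y => / F y ^ n).
Proof.
  intros HF Hn. apply smooth_ext with (fun y => (/ F y) ^ n); [intro; apply pow_inv|].
  induction n as [|n IH]; [apply (smooth_const 1)|].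
  apply smooth_mult; auto. apply smooth_inv; auto.
Qed.

Section InversePowers.
Variables (F rho : R -> R -> R) (c0 : R).
Hypotheses (F_smooth : smooth_family F) (F_dominated : dominated F rho)
  (rho_pos : forall w y, D w -> 0 < rho w y) (c0_pos : 0 < c0)
  (F_ge : forall w y, D w -> c0 * rho w y <= F w y).

Lemma lower_bounded_pos w y : D w -> 0 < F w y.
Proof.
  intros Dw. apply Rlt_le_trans with (c0 * rho w y); auto.
  apply Rmult_lt_0_compat; auto.
Qed.

(* Induction on the order: by [Derive_inv_pow] the derivative of [/ F ^ (n+1)] is
   [F'] times [/ F ^ (n+2)], and [F'] costs one factor [rho]. *)
Lemma dominated_upto_inv_pow k : forall n,
  dominated_upto (fun w y => / F w y ^ S n) (fun w y => / rho w y ^ S n) k.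
Proof.
  induction k as [|k IH]; intros n j Hj.
  - assert (j = 0%nat) by lia. subst j. exists ((/ c0) ^ S n). intros w y Dw. cbn [Derive_n].
    rewrite Rabs_pos_eq by (left; apply Rinv_0_lt_compat, pow_lt, lower_bounded_pos; auto).
    rewrite pow_inv, <- Rinv_mult, <- Rpow_mult_distr.
    apply Rinv_le_contravar.
    + apply pow_lt, Rmult_lt_0_compat; auto.
    + apply pow_incr. split; [left; apply Rmult_lt_0_compat; auto|].
      assert (H := F_ge w y Dw). lra.
  - destruct (Nat.le_gt_cases j k) as [Hjk|Hjk]; [apply IH; auto|].
    assert (j = S k) by lia. subst j.
    destruct (dominated_upto_mult rho (fun w y => / rho w y ^ S (S n)) k)
      with (F := fun w => Derive (F w)) (G := fun w y => / F w y ^ S (S n)) as [C HC].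
    + intros w y Dw. left; auto.
    + intros w y Dw. left. apply Rinv_0_lt_compat, pow_lt; auto.
    + intros w Dw. apply smooth_Derive, F_smooth; auto.
    + intros w Dw. apply smooth_inv_pow; [apply F_smooth; auto|].
      intro; apply Rgt_not_eq, lower_bounded_pos; auto.
    + apply dominated_upto_Derive, dominated_dominated_upto; auto.
    + apply IH.
    + exists (INR (S n) * C). intros w y Dw.
      rewrite Derive_n_S_Derive.
      rewrite (Derive_n_ext _ (fun y => - INR (S n) * (Derive (F w) y * / F w y ^ S (S n)))).
      2: { intro t. apply Derive_inv_pow; [apply F_smooth; auto|].
           apply Rgt_not_eq, lower_bounded_pos; auto. }
      rewrite Derive_n_scal_l, Rabs_mult, Rabs_Ropp, Rabs_pos_eq by apply pos_INR.
      specialize (HC w y Dw).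
      assert (Hr : rho w y <> 0) by (apply Rgt_not_eq, rho_pos, Dw).
      replace (INR (S n) * C * / rho w y ^ S n)
        with (INR (S n) * (C * (rho w y * / rho w y ^ S (S n))))
        by (simpl; field; split; auto; apply pow_nonzero; auto).
      apply Rmult_le_compat_l; [apply pos_INR | exact HC].
Qed.

Lemma dominated_inv_pow n :
  dominated (fun w y => / F w y ^ S n) (fun w y => / rho w y ^ S n).
Proof. intro k. apply (dominated_upto_inv_pow k n k). lia. Qed.

End InversePowers.

End Families.

Section Conjugation.
Variables (w : R) (P g : R -> R).

(* [Mm_op], [Mp_op] and [Uop (W2 w)] with [Q^4] and [W2' / W2] replaced by arbitrary
   [P] and [g]. *)
Definition Mm_P (F : R -> R) y := - Derive_n F 2 y + F y - w * P y * F y.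
Definition Mp_P (F : R -> R) y := - Derive_n F 2 y + F y + w / 3 * P y * F y.
Definition U_g (F : R -> R) y := Derive F y - g y * F y.

(* The coefficients are chosen so that the terms in [f'], ..., [f''''] of
   [U_g (Mp_P (Mm_P f)) - K (U_g f)] cancel. *)
Definition conj_K2 y := 2 * w / 3 * P y + 4 * Derive_n g 1 y.
Definition conj_K1 y :=
  8 * w / 3 * Derive_n P 1 y + 6 * Derive_n g 2 y + 4 * g y * Derive_n g 1 y.
Definition conj_a0 y := (1 + w / 3 * P y) * (1 - w * P y) + w * Derive_n P 2 y.
Definition conj_b2 y := -2 + 2 * w / 3 * P y + 4 * Derive_n g 1 y.
Definition conj_K0 y :=
  2 * w * Derive_n P 2 y + conj_a0 y - 2 * w * g y * Derive_n P 1 y + 4 * Derive_n g 3 y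
  + 2 * conj_b2 y * Derive_n g 1 y + conj_K1 y * g y - 1.
Definition conj_residual y :=
  (w / 3 * Derive_n P 1 y * (1 - w * P y) + (1 + w / 3 * P y) * (- w * Derive_n P 1 y)
   + w * Derive_n P 3 y)
  - g y * conj_a0 y + Derive_n g 4 y + conj_b2 y * Derive_n g 2 y
  + conj_K1 y * Derive_n g 1 y + (conj_K0 y + 1) * g y.

Section Expansion.
Variable f : R -> R.
Hypotheses (HP : smooth P) (Hg : smooth g) (Hf : smooth f).

Ltac ex_derive_atoms := repeat split; repeat match goal with
  | |- ex_derive (fun x => Derive_n ?F ?k x) _ =>
      apply (smooth_ex_derive (Derive_n F k)); apply smooth_Derive_n; assumption
  | |- ex_derive _ _ => apply smooth_ex_derive; assumption end.

Ltac set_atoms := repeat match goal with |- context [Derive_n ?F ?k] =>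
   let a := fresh "atom" in set (a := Derive_n F k) end.
Ltac unset_atoms := repeat match goal with x := Derive_n _ _ |- _ => subst x end.

Lemma Derive_Derive_n F n y : Derive (Derive_n F n) y = Derive_n F (S n) y.
Proof. reflexivity. Qed.

Lemma Derive_Derive_n_1 F y : Derive F y = Derive_n F 1 y.
Proof. reflexivity. Qed.

(* Differentiates a polynomial in the derivatives of [f], [P], [g]. *)
Ltac derive_poly := apply is_derive_unique; set_atoms; auto_derive; unset_atoms;
  [ ex_derive_atoms
  | eta_contract; rewrite ?Derive_Derive_n, ?(Derive_Derive_n_1 f), ?(Derive_Derive_n_1 P),
      ?(Derive_Derive_n_1 g); ring ].

(* [Mmf k] and [Uf k] are the expanded [k]-th derivatives of [Mm_P f] and [U_g f]. *)
Definition Mmf0 y := - Derive_n f 2 y + f y - w * P y * f y.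
Definition Mmf1 y :=
  - Derive_n f 3 y + Derive_n f 1 y - w * (Derive_n P 1 y * f y + P y * Derive_n f 1 y).
Definition Mmf2 y :=
  - Derive_n f 4 y + Derive_n f 2 y
  - w * (Derive_n P 2 y * f y + 2 * Derive_n P 1 y * Derive_n f 1 y + P y * Derive_n f 2 y).
Definition Mmf3 y :=
  - Derive_n f 5 y + Derive_n f 3 y
  - w * (Derive_n P 3 y * f y + 3 * Derive_n P 2 y * Derive_n f 1 y
         + 3 * Derive_n P 1 y * Derive_n f 2 y + P y * Derive_n f 3 y).

Lemma Derive_Mm_P : Derive (Mm_P f) = Mmf1.
Proof. apply functional_extensionality; intro y. unfold Mm_P, Mmf1. derive_poly. Qed.

Lemma Derive_Mmf1 : Derive Mmf1 = Mmf2.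
Proof. apply functional_extensionality; intro y. unfold Mmf1, Mmf2. derive_poly. Qed.

Definition MpMmf y := - Mmf2 y + Mmf0 y + w / 3 * P y * Mmf0 y.

Lemma Mp_P_Mm_P : Mp_P (Mm_P f) = MpMmf.
Proof.
  apply functional_extensionality; intro y. unfold Mp_P, MpMmf.
  change (Derive_n (Mm_P f) 2 y) with (Derive (Derive (Mm_P f)) y).
  now rewrite Derive_Mm_P, Derive_Mmf1.
Qed.

Lemma Derive_MpMmf y :
  Derive MpMmf y = - Mmf3 y + Mmf1 y + w / 3 * (Derive_n P 1 y * Mmf0 y + P y * Mmf1 y).
Proof. unfold MpMmf, Mmf0, Mmf1, Mmf2, Mmf3. derive_poly. Qed.

Definition Uf0 y := Derive_n f 1 y - g y * f y.
Definition Uf1 y := Derive_n f 2 y - Derive_n g 1 y * f y - g y * Derive_n f 1 y.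
Definition Uf2 y := Derive_n f 3 y - Derive_n g 2 y * f y - 2 * Derive_n g 1 y * Derive_n f 1 y
  - g y * Derive_n f 2 y.
Definition Uf3 y := Derive_n f 4 y - Derive_n g 3 y * f y - 3 * Derive_n g 2 y * Derive_n f 1 y
  - 3 * Derive_n g 1 y * Derive_n f 2 y - g y * Derive_n f 3 y.
Definition Uf4 y := Derive_n f 5 y - Derive_n g 4 y * f y - 4 * Derive_n g 3 y * Derive_n f 1 y
  - 6 * Derive_n g 2 y * Derive_n f 2 y - 4 * Derive_n g 1 y * Derive_n f 3 y
  - g y * Derive_n f 4 y.

Lemma Derive_Uf0 : Derive Uf0 = Uf1.
Proof. apply functional_extensionality; intro y. unfold Uf0, Uf1. derive_poly. Qed.
Lemma Derive_Uf1 : Derive Uf1 = Uf2.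
Proof. apply functional_extensionality; intro y. unfold Uf1, Uf2. derive_poly. Qed.
Lemma Derive_Uf2 : Derive Uf2 = Uf3.
Proof. apply functional_extensionality; intro y. unfold Uf2, Uf3. derive_poly. Qed.
Lemma Derive_Uf3 : Derive Uf3 = Uf4.
Proof. apply functional_extensionality; intro y. unfold Uf3, Uf4. derive_poly. Qed.

Lemma conjugation_defect y :
  U_g (Mp_P (Mm_P f)) y - Kop conj_K2 conj_K1 conj_K0 (U_g f) y = conj_residual y * f y.
Proof.
  unfold U_g at 1. rewrite Mp_P_Mm_P, Derive_MpMmf.
  change (U_g f) with Uf0. unfold Kop.
  change (Derive_n Uf0 4 y) with (Derive (Derive (Derive (Derive Uf0))) y).
  change (Derive_n Uf0 2 y) with (Derive (Derive Uf0) y).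
  rewrite Derive_Uf0, Derive_Uf1, Derive_Uf2, Derive_Uf3.
  unfold conj_residual, conj_K0, Uf0, Uf1, Uf2, Uf3, Uf4, MpMmf, Mmf0, Mmf1, Mmf2, Mmf3,
    conj_K2, conj_a0, conj_b2, conj_K1.
  field.
Qed.

End Expansion.

Section CoefficientSmoothness.
Hypotheses (HP : smooth P) (Hg : smooth g).

Ltac smooth_tac :=
  repeat match goal with
  | |- smooth (fun _ => ?c) => apply (smooth_const c)
  | |- smooth (fun y => @?A y + @?B y) => apply (smooth_plus A B)
  | |- smooth (fun y => @?A y - @?B y) => apply (smooth_minus A B)
  | |- smooth (fun y => @?A y * @?B y) => apply (smooth_mult A B)
  | |- smooth (fun y => Derive_n ?F _ y) => apply smooth_Derive_n
  | |- smooth (fun y => P y) => exact HP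
  | |- smooth (fun y => g y) => exact Hg
  | |- smooth P => exact HP
  | |- smooth g => exact Hg
  end.

Lemma smooth_conj_K2 : smooth conj_K2.
Proof. unfold conj_K2. smooth_tac. Qed.

Lemma smooth_conj_K1 : smooth conj_K1.
Proof. unfold conj_K1. smooth_tac. Qed.

Lemma smooth_conj_b2 : smooth conj_b2.
Proof. unfold conj_b2. smooth_tac. Qed.

Lemma smooth_conj_K0 : smooth conj_K0.
Proof. unfold conj_K0, conj_a0, conj_b2, conj_K1. smooth_tac. Qed.

End CoefficientSmoothness.

End Conjugation.

Definition log_deriv (W : R -> R) y := Derive W y / W y.

Lemma smooth_log_deriv W : smooth W -> (forall y, W y <> 0) -> smooth (log_deriv W).
Proof. intros. apply smooth_mult; [now apply smooth_Derive | now apply smooth_inv]. Qed.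

(* [U] annihilates [W] and [W] is an eigenfunction of [M+ M-], so the defect
   [conj_residual * W] vanishes; as [W] has no zero, so does [conj_residual]. *)
Lemma conjugation_identity w P W mu : smooth P -> smooth W -> (forall y, W y <> 0) ->
  (forall y, Mp_P w P (Mm_P w P W) y = mu * W y) ->
  forall f, smooth f -> forall y,
  U_g (log_deriv W) (Mp_P w P (Mm_P w P f)) y =
  Kop (conj_K2 w P (log_deriv W)) (conj_K1 w P (log_deriv W)) (conj_K0 w P (log_deriv W))
    (U_g (log_deriv W) f) y.
Proof.
  intros HP HW W_neq0 Heig.
  assert (Hg := smooth_log_deriv W HW W_neq0).
  assert (U_W : U_g (log_deriv W) W = fun _ => 0).
  { apply functional_extensionality; intro y. unfold U_g, log_deriv. field. apply W_neq0. }
  assert (residual_0 : forall y, conj_residual w P (log_deriv W) y = 0).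
  { intro y. apply Rmult_eq_reg_r with (W y); [|apply W_neq0]. rewrite Rmult_0_l.
    rewrite <- conjugation_defect by assumption.
    rewrite (functional_extensionality _ _ Heig), U_W.
    unfold U_g, Kop. rewrite Derive_scal, (Derive_n_const 3), (Derive_n_const 1), Derive_const.
    unfold log_deriv. field. apply W_neq0. }
  intros f Hf y. apply Rminus_diag_uniq.
  rewrite conjugation_defect, residual_0 by assumption. ring.
Qed.

Lemma exp_le_compat x y : x <= y -> exp x <= exp y.
Proof. intros [H|H]; [left; now apply exp_increasing | subst; lra]. Qed.

Lemma exp_decay_eventually_lt B e a y0 : 0 < B -> 0 < e -> 0 < a ->
  exists Y, y0 <= Y /\ B * exp (- a * Y) < e.
Proof.
  intros HB He Ha. set (Y := Rmax y0 (- ln (e / B) / a + 1)).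
  exists Y. split; [apply Rmax_l|].
  assert (HY : - a * Y < ln (e / B)).
  { apply Rle_lt_trans with (- a * (- ln (e / B) / a + 1)).
    - apply Rmult_le_compat_neg_l; [lra | apply Rmax_r].
    - replace (- a * (- ln (e / B) / a + 1)) with (ln (e / B) - a) by (field; lra). lra. }
  apply exp_increasing in HY. rewrite exp_ln in HY by (apply Rdiv_lt_0_compat; auto).
  apply Rmult_lt_compat_l with (r := B) in HY; auto.
  replace (B * (e / B)) with e in HY by (field; lra). exact HY.
Qed.

Section StableMode.
Variables (W W1 W2 : R -> R) (a k M B : R).
Hypotheses (a_pos : 0 < a) (k_pos : 0 < k) (M_nonneg : 0 <= M)
  (W_derive : forall y, is_derive W y (W1 y)) (W1_derive : forall y, is_derive W1 y (W2 y))
  (residual_bound : forall y, 0 <= y -> Rabs (W2 y - a ^ 2 * W y) <= M * exp (- k * y))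
  (stable_bound : forall y, 0 <= y -> Rabs (W1 y + a * W y) <= B * exp (- a * y)).

Let c := M / (a + k).
Let defect t := exp (- a * t) * (W1 t + a * W t) - c * exp (- (a + k) * t).

Lemma exp_rates_split t : exp (- (a + k) * t) = exp (- a * t) * exp (- k * t).
Proof. rewrite <- exp_plus. f_equal. ring. Qed.

(* [defect' = exp (- a t) (W2 - a^2 W) + M exp (- (a + k) t)], nonnegative by the
   residual bound. *)
Lemma stable_mode_defect_nondecreasing y Y : 0 <= y -> y <= Y -> defect y <= defect Y.
Proof.
  intros Hy HY.
  set (ddefect := fun t => exp (- a * t) * (W2 t - a ^ 2 * W t) + M * exp (- (a + k) * t)).
  assert (defect_derive : forall t, is_derive defect t (ddefect t)).
  { intro t. unfold defect, ddefect, c.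
    assert (E1 : Derive W t = W1 t) by now apply is_derive_unique.
    assert (E2 : Derive W1 t = W2 t) by now apply is_derive_unique.
    auto_derive.
    - repeat split; eexists; eauto.
    - eta_contract. rewrite E1, E2. field. lra. }
  destruct (MVT_gen defect y Y ddefect) as [t [Ht Eq]].
  - intros; apply defect_derive.
  - intros. apply continuity_pt_filterlim, (ex_derive_continuous defect).
    eexists; apply defect_derive.
  - rewrite Rmin_left in Ht by auto. rewrite Rmax_right in Ht by auto.
    assert (ddefect_nonneg : 0 <= ddefect t).
    { unfold ddefect. specialize (residual_bound t ltac:(lra)).
      apply Rabs_le_between in residual_bound.
      assert (exp (- a * t) * (- (M * exp (- k * t)))
              <= exp (- a * t) * (W2 t - a ^ 2 * W t))
        by (apply Rmult_le_compat_l; [left; apply exp_pos | lra]).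
      rewrite exp_rates_split. lra. }
    assert (0 <= ddefect t * (Y - y)) by (apply Rmult_le_pos; lra). lra.
Qed.

Lemma stable_mode_defect_le Y : 0 <= Y -> defect Y <= B * exp (- (2 * a) * Y).
Proof.
  intros HY. unfold defect. specialize (stable_bound Y HY).
  assert (exp (- a * Y) * (W1 Y + a * W Y) <= exp (- a * Y) * (B * exp (- a * Y))).
  { apply Rmult_le_compat_l; [left; apply exp_pos|].
    apply Rle_trans with (2 := stable_bound). apply Rle_abs. }
  replace (- (2 * a) * Y) with (- a * Y + - a * Y) by ring. rewrite exp_plus.
  assert (0 <= c) by (apply Rdiv_le_0_compat; lra).
  assert (0 <= c * exp (- (a + k) * Y)) by (apply Rmult_le_pos; auto; left; apply exp_pos).
  lra.
Qed.

(* [defect] is nondecreasing and tends to [0], hence nonpositive. *)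
Lemma stable_mode_decay_upper y : 0 <= y -> W1 y + a * W y <= M / (a + k) * exp (- k * y).
Proof.
  intros Hy. fold c.
  destruct (Rle_or_lt (W1 y + a * W y) (c * exp (- k * y))) as [H|H]; [exact H|].
  exfalso.
  assert (defect_y_pos : 0 < defect y).
  { unfold defect. rewrite exp_rates_split.
    assert (0 < exp (- a * y) * (W1 y + a * W y - c * exp (- k * y)))
      by (apply Rmult_lt_0_compat; [apply exp_pos | lra]).
    nra. }
  destruct (Rle_or_lt B 0) as [HB|HB].
  - assert (defect y <= B * exp (- (2 * a) * y)) by (apply stable_mode_defect_le; auto).
    assert (0 <= exp (- (2 * a) * y)) by (left; apply exp_pos). nra.
  - destruct (exp_decay_eventually_lt B (defect y) (2 * a) y HB defect_y_pos)
      as [Y [HY1 HY2]]; [lra|].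
    assert (defect y <= defect Y) by (apply stable_mode_defect_nondecreasing; auto).
    assert (defect Y <= B * exp (- (2 * a) * Y)) by (apply stable_mode_defect_le; lra).
    lra.
Qed.

End StableMode.

Lemma stable_mode_decay (W W1 W2 : R -> R) (a k M B : R) : 0 < a -> 0 < k -> 0 <= M ->
  (forall y, is_derive W y (W1 y)) -> (forall y, is_derive W1 y (W2 y)) ->
  (forall y, 0 <= y -> Rabs (W2 y - a ^ 2 * W y) <= M * exp (- k * y)) ->
  (forall y, 0 <= y -> Rabs (W1 y + a * W y) <= B * exp (- a * y)) ->
  forall y, 0 <= y -> Rabs (W1 y + a * W y) <= M / (a + k) * exp (- k * y).
Proof.
  intros Ha Hk HM D1 D2 Hr Hs y Hy. apply Rabs_le. split.
  - enough (- W1 y + a * - W y <= M / (a + k) * exp (- k * y)) by lra.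
    apply (stable_mode_decay_upper (fun t => - W t) (fun t => - W1 t) (fun t => - W2 t)
      a k M B); auto.
    + intro t. exact (is_derive_opp _ _ _ (D1 t)).
    + intro t. exact (is_derive_opp _ _ _ (D2 t)).
    + intros t Ht. replace (- W2 t - a ^ 2 * - W t) with (- (W2 t - a ^ 2 * W t)) by ring.
      rewrite Rabs_Ropp; auto.
    + intros t Ht. replace (- W1 t + a * - W t) with (- (W1 t + a * W t)) by ring.
      rewrite Rabs_Ropp; auto.
  - apply (stable_mode_decay_upper W W1 W2 a k M B); auto.
Qed.

(* On [y < 0] the same estimate applies to [V (- y)]. *)
Lemma stable_mode_decay_two_sided (V : R -> R) (a k M B : R) :
  0 < a -> 0 < k -> 1 <= a + k -> 0 <= M -> smooth V ->
  (forall y, Rabs (Derive_n V 2 y - a ^ 2 * V y) <= M * exp (- k * Rabs y)) ->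
  (forall y, Rabs (Derive V y + a * V y) <= B * exp (- a * Rabs y) /\
             Rabs (- Derive V y + a * V y) <= B * exp (- a * Rabs y)) ->
  forall y, Rabs (Derive V y + a * V y) <= M * exp (- k * Rabs y) \/
            Rabs (- Derive V y + a * V y) <= M * exp (- k * Rabs y).
Proof.
  intros Ha Hk Hak HM HV Hres Hslope y.
  assert (rate : M / (a + k) <= M).
  { unfold Rdiv. rewrite <- (Rmult_1_r M) at 2. apply Rmult_le_compat_l; [exact HM|].
    rewrite <- Rinv_1. apply Rinv_le_contravar; lra. }
  assert (V_derive : forall t, is_derive V t (Derive V t))
    by (intro; apply Derive_correct, smooth_ex_derive, HV).
  assert (V'_derive : forall t, is_derive (Derive V) t (Derive_n V 2 t))
    by (intro; apply Derive_correct, smooth_ex_derive, smooth_Derive, HV).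
  destruct (Rle_or_lt 0 y) as [Hy|Hy].
  - left. eapply Rle_trans.
    + apply (stable_mode_decay V (Derive V) (Derive_n V 2) a k M B); auto.
      * intros t Ht. specialize (Hres t). rewrite (Rabs_pos_eq t Ht) in Hres. exact Hres.
      * intros t Ht. specialize (Hslope t). rewrite (Rabs_pos_eq t Ht) in Hslope. apply Hslope.
    + rewrite (Rabs_pos_eq y) by exact Hy.
      apply Rmult_le_compat_r; [left; apply exp_pos | exact rate].
  - right.
    assert (H : Rabs (- Derive V (- - y) + a * V (- - y))
                <= M / (a + k) * exp (- k * - y)).
    { apply (stable_mode_decay (fun t => V (- t)) (fun t => - Derive V (- t))
        (fun t => Derive_n V 2 (- t)) a k M B); auto; try lra.
      - intro t. auto_derive; [apply smooth_ex_derive, HV|]. eta_contract. ring.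
      - intro t. set (dV := Derive V). auto_derive.
        + apply (smooth_ex_derive dV), smooth_Derive, HV.
        + subst dV. eta_contract. change (Derive (Derive V) (- t)) with (Derive_n V 2 (- t)). ring.
      - intros t Ht. specialize (Hres (- t)). rewrite Rabs_Ropp, (Rabs_pos_eq t Ht) in Hres.
        exact Hres.
      - intros t Ht. specialize (Hslope (- t)). rewrite Rabs_Ropp, (Rabs_pos_eq t Ht) in Hslope.
        apply Hslope. }
    rewrite Ropp_involutive in H. eapply Rle_trans; [exact H|].
    rewrite (Rabs_left y) by exact Hy. apply Rmult_le_compat_r; [left; apply exp_pos | exact rate].
Qed.

Definition Q4 w y := Q w y ^ 4.

Definition Q_denominator w y := 1 + a_om w * ((exp (2 * y) + exp ((-2) * y)) / 2).

Lemma a_om_bounds w : 0 < w <= 1 -> 1 <= a_om w <= 3.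
Proof.
  intros Hw. unfold a_om. split.
  - apply Rle_trans with (sqrt 1); [rewrite sqrt_1; lra | apply sqrt_le_1_alt; lra].
  - apply Rle_trans with (sqrt (3 * 3)); [|rewrite sqrt_square; lra].
    apply sqrt_le_1_alt; lra.
Qed.

Lemma exp_scal_le_exp_abs c y : 0 <= c ->
  exp (c * y) <= exp (c * Rabs y) /\ exp ((- c) * y) <= exp (c * Rabs y).
Proof.
  intros Hc. split; apply exp_le_compat.
  - apply Rmult_le_compat_l; [exact Hc | apply Rle_abs].
  - rewrite <- Rabs_Ropp. replace (- c * y) with (c * - y) by ring.
    apply Rmult_le_compat_l; [exact Hc | apply Rle_abs].
Qed.

Lemma Q_denominator_ge w y : 0 < w <= 1 -> / 2 * exp (2 * Rabs y) <= Q_denominator w y.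
Proof.
  intros Hw. unfold Q_denominator. destruct (a_om_bounds w Hw).
  assert (E1 := exp_pos (2 * y)). assert (E2 := exp_pos ((-2) * y)).
  assert (exp (2 * Rabs y) <= exp (2 * y) + exp ((-2) * y)).
  { destruct (Rle_lt_dec 0 y).
    - rewrite Rabs_pos_eq; lra.
    - rewrite Rabs_left by lra. replace (2 * - y) with ((-2) * y) by ring. lra. }
  nra.
Qed.

Lemma Q_denominator_pos w y : 0 < w <= 1 -> 0 < Q_denominator w y.
Proof.
  intros Hw. eapply Rlt_le_trans; [|apply Q_denominator_ge; auto].
  assert (H0 := exp_pos (2 * Rabs y)). lra.
Qed.

Lemma Q4_eq w y : 0 < w <= 1 -> Q4 w y = 16 * / Q_denominator w y ^ 2.
Proof.
  intros Hw. unfold Q4, Q. assert (H := Q_denominator_pos w y Hw).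
  replace (1 + a_om w * cosh (2 * y)) with (Q_denominator w y).
  2: { unfold Q_denominator, cosh. replace ((-2) * y) with (- (2 * y)) by ring.
       reflexivity. }
  replace (sqrt (4 / Q_denominator w y) ^ 4) with ((sqrt (4 / Q_denominator w y) ^ 2) ^ 2)
    by ring.
  rewrite pow2_sqrt; [field; lra|]. apply Rlt_le, Rdiv_lt_0_compat; lra.
Qed.

Lemma smooth_Q_denominator w : smooth (Q_denominator w).
Proof.
  unfold Q_denominator. apply smooth_plus; [apply smooth_const|]. apply smooth_scal.
  apply smooth_ext with (fun y => / 2 * exp (2 * y) + / 2 * exp ((-2) * y)); [intro; field|].
  apply smooth_plus; apply smooth_scal; apply smooth_exp_scal.
Qed.

Section Q4Bounds.
Variable D : R -> Prop.
Hypothesis D_small : forall w, D w -> 0 < w <= 1.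

Lemma dominated_exp_scal c : 0 <= c ->
  dominated D (fun _ y => exp (c * y)) (fun _ y => exp (c * Rabs y)) /\
  dominated D (fun _ y => exp ((- c) * y)) (fun _ y => exp (c * Rabs y)).
Proof.
  intros Hc. split; intro k; exists (c ^ k); intros w y _; rewrite Derive_n_exp_scal;
    rewrite Rabs_mult, (Rabs_pos_eq (exp _)) by (left; apply exp_pos).
  - rewrite Rabs_pos_eq by (apply pow_le; auto).
    apply Rmult_le_compat_l; [apply pow_le; auto | apply exp_scal_le_exp_abs; auto].
  - rewrite <- RPow_abs, Rabs_Ropp, Rabs_pos_eq by auto.
    apply Rmult_le_compat_l; [apply pow_le; auto | apply exp_scal_le_exp_abs; auto].
Qed.

Lemma Q_denominator_dominated :
  dominated D Q_denominator (fun _ y => exp (2 * Rabs y)).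
Proof.
  unfold Q_denominator. destruct (dominated_exp_scal 2) as [Hplus Hminus]; [lra|].
  assert (exp_ge_1 : forall y, 1 <= exp (2 * Rabs y)).
  { intro y. rewrite <- exp_0. apply exp_le_compat.
    assert (0 <= Rabs y) by apply Rabs_pos. lra. }
  apply dominated_plus.
  - apply (smooth_family_const D (fun _ => 1)).
  - intros w _. apply smooth_scal.
    apply smooth_ext with (fun y => / 2 * exp (2 * y) + / 2 * exp ((-2) * y));
      [intro; field|].
    apply smooth_plus; apply smooth_scal; apply smooth_exp_scal.
  - apply (dominated_weaken D (fun _ _ => 1) _ _ 1);
      [intros w y _; cbv beta; lra | | apply dominated_const].
    intros w y _. rewrite Rmult_1_l. apply exp_ge_1.
  - apply dominated_ext
      with (fun w y => (a_om w / 2) * (exp (2 * y) + exp ((-2) * y))); [intros; field|].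
    apply dominated_scal_bounded with 2.
    + intros w y _. left; apply exp_pos.
    + intros w Dw. destruct (a_om_bounds w (D_small w Dw)). rewrite Rabs_pos_eq; lra.
    + apply dominated_plus; auto; intros w _; apply smooth_exp_scal.
Qed.

Lemma smooth_family_Q4 : smooth_family D Q4.
Proof.
  intros w Dw. apply smooth_ext with (fun y => 16 * / Q_denominator w y ^ 2).
  - intro y. symmetry. apply Q4_eq; auto.
  - apply smooth_scal, smooth_inv_pow; [apply smooth_Q_denominator|].
    intro y. apply Rgt_not_eq, Q_denominator_pos; auto.
Qed.

Lemma Q4_dominated : dominated D Q4 (fun _ y => exp (-4 * Rabs y)).
Proof.
  apply dominated_ext with (fun w y => 16 * / Q_denominator w y ^ 2).
  { intros. symmetry. apply Q4_eq; auto. }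
  apply dominated_scal; [intros; left; apply exp_pos|].
  apply (dominated_weaken D (fun w y => / exp (2 * Rabs y) ^ 2) _ _ 1).
  - intros w y _. left. apply Rinv_0_lt_compat, pow_lt, exp_pos.
  - intros w y _. cbv beta. simpl. rewrite Rmult_1_l, Rmult_1_r, <- exp_plus, <- exp_Ropp.
    right. f_equal. ring.
  - apply (dominated_inv_pow D Q_denominator (fun _ y => exp (2 * Rabs y)) (/ 2)).
    + intros w _. apply smooth_Q_denominator.
    + exact Q_denominator_dominated.
    + intros; apply exp_pos.
    + lra.
    + intros w y Dw. apply Q_denominator_ge; auto.
Qed.

End Q4Bounds.

Lemma Derive_n_riccati (G H : R -> R) (c : R) : smooth G -> smooth H ->
  (forall t, Derive G t = c - G t * G t + H t) -> forall k y,
  Derive_n (Derive G) (S k) y =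
  -2 * Derive_n (fun t => Derive G t * G t) k y + Derive_n H (S k) y.
Proof.
  intros SG SH E k y. rewrite Derive_n_S_Derive.
  rewrite (Derive_n_ext (Derive (Derive G)) (fun t => -2 * (Derive G t * G t) + Derive H t)).
  - rewrite smooth_Derive_n_plus, Derive_n_scal_l, Derive_n_S_Derive; [reflexivity| |].
    + apply smooth_scal, smooth_mult; auto using smooth_Derive.
    + now apply smooth_Derive.
  - intro t. rewrite (Derive_ext _ (fun t => c - G t * G t + H t)) by auto.
    apply is_derive_unique. auto_derive.
    + repeat split; now apply smooth_ex_derive.
    + eta_contract. ring.
Qed.

Lemma Rabs_sqr_diff_le a g X Cg : 0 < a <= 1 -> Rabs g <= Cg ->
  Rabs (a + g) <= X \/ Rabs (a - g) <= X -> Rabs (a ^ 2 - g * g) <= (1 + Cg) * X.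
Proof.
  intros Ha Hg Hor.
  replace (a ^ 2 - g * g) with ((a + g) * (a - g)) by ring. rewrite Rabs_mult.
  assert (Hp : Rabs (a + g) <= 1 + Cg).
  { eapply Rle_trans; [apply Rabs_triang|]. rewrite Rabs_pos_eq; lra. }
  assert (Hm : Rabs (a - g) <= 1 + Cg).
  { eapply Rle_trans; [apply Rabs_triang|]. rewrite Rabs_Ropp, Rabs_pos_eq; lra. }
  assert (0 <= Rabs (a + g)) by apply Rabs_pos. assert (0 <= Rabs (a - g)) by apply Rabs_pos.
  destruct Hor; nra.
Qed.

Section InternalMode.
Variables (D : R -> Prop) (alpha : R -> R) (W1 W2 : R -> R -> R).

Definition kappa w := sqrt (2 - alpha w ^ 2).
Definition mode_weight w y := exp (- alpha w * Rabs y).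
Definition gap_weight w y := w * exp (- kappa w * Rabs y).
Definition target_weight w y := w * exp (- (kappa w - alpha w) * Rabs y).

Hypotheses
  (D_small : forall w, D w -> 0 < w <= 1)
  (alpha_bounds : forall w, D w -> 0 < alpha w <= 1)
  (W1_smooth : smooth_family D W1) (W2_smooth : smooth_family D W2)
  (W1_eig : forall w y, D w -> Mp_op w (W1 w) y = (1 - alpha w ^ 2) * W2 w y)
  (W2_eig : forall w y, D w -> Mm_op w (W2 w) y = (1 - alpha w ^ 2) * W1 w y)
  (W2_dominated : dominated D W2 mode_weight)
  (W12_dominated : dominated D (fun w y => W1 w y - W2 w y) gap_weight)
  (W2_between : forall w y, D w ->
     / 2 * mode_weight w y <= W2 w y <= 3 / 2 * mode_weight w y).

Lemma kappa_bounds w : D w -> 1 <= kappa w <= 2.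
Proof.
  intros Dw. destruct (alpha_bounds w Dw). unfold kappa. split.
  - apply Rle_trans with (sqrt 1); [rewrite sqrt_1; lra | apply sqrt_le_1_alt; nra].
  - apply Rle_trans with (sqrt (2 * 2)); [apply sqrt_le_1_alt; nra | rewrite sqrt_square; lra].
Qed.

Lemma mode_weight_pos w y : 0 < mode_weight w y.
Proof. apply exp_pos. Qed.

Lemma target_weight_nonneg : nonneg_on D target_weight.
Proof. intros w y Dw. apply Rmult_le_pos; [apply Rlt_le, D_small, Dw | left; apply exp_pos]. Qed.

Lemma target_weight_le_1 w y : D w -> target_weight w y <= 1.
Proof.
  intros Dw. unfold target_weight. destruct (kappa_bounds w Dw), (alpha_bounds w Dw).
  destruct (D_small w Dw).
  assert (exp (- (kappa w - alpha w) * Rabs y) <= 1).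
  { rewrite <- exp_0. apply exp_le_compat. assert (0 <= Rabs y) by apply Rabs_pos. nra. }
  assert (0 < exp (- (kappa w - alpha w) * Rabs y)) by apply exp_pos. nra.
Qed.

Let e4 (w y : R) := exp (-4 * Rabs y).

Lemma e4_nonneg : nonneg_on D e4.
Proof. intros w y _. left; apply exp_pos. Qed.

Lemma e4_le_1 w y : e4 w y <= 1.
Proof.
  unfold e4. rewrite <- exp_0. apply exp_le_compat.
  assert (0 <= Rabs y) by apply Rabs_pos. lra.
Qed.

(* [kappa - alpha <= 2 < 4]. *)
Lemma Q4_weight_le w y : D w -> Rabs w * e4 w y <= target_weight w y.
Proof.
  intros Dw. destruct (kappa_bounds w Dw), (alpha_bounds w Dw), (D_small w Dw).
  rewrite Rabs_pos_eq by lra. apply Rmult_le_compat_l; [lra|].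
  apply exp_le_compat. assert (0 <= Rabs y) by apply Rabs_pos. nra.
Qed.

Lemma dominated_w_decay c F : dominated D F e4 ->
  dominated D (fun w y => (c * w) * F w y) target_weight.
Proof.
  intros HF.
  apply (dominated_weaken D (fun w y => Rabs (c * w) * e4 w y) _ _ (Rabs c)).
  - intros w y _. apply Rmult_le_pos; [apply Rabs_pos | left; apply exp_pos].
  - intros w y Dw. rewrite Rabs_mult, Rmult_assoc.
    apply Rmult_le_compat_l; [apply Rabs_pos | now apply Q4_weight_le].
  - apply dominated_scal_weight; [intros w y _; left; apply exp_pos | exact HF].
Qed.

Lemma W2_pos w y : D w -> 0 < W2 w y.
Proof.
  intros Dw. destruct (W2_between w y Dw). assert (Hm := mode_weight_pos w y). lra.
Qed.

Lemma W2_neq0 w y : D w -> W2 w y <> 0.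
Proof. intros Dw. apply Rgt_not_eq, W2_pos, Dw. Qed.

Lemma smooth_family_inv_W2 : smooth_family D (fun w y => / W2 w y).
Proof. intros w Dw. apply smooth_inv; [now apply W2_smooth | intro; now apply W2_neq0]. Qed.

Lemma inv_W2_dominated : dominated D (fun w y => / W2 w y) (fun w y => exp (alpha w * Rabs y)).
Proof.
  apply dominated_ext with (fun w y => / W2 w y ^ 1); [intros; now rewrite pow_1|].
  apply (dominated_weaken D (fun w y => / mode_weight w y ^ 1) _ _ 1).
  - intros w y _. left. apply Rinv_0_lt_compat, pow_lt, mode_weight_pos.
  - intros w y _. rewrite pow_1, Rmult_1_l. unfold mode_weight. rewrite <- exp_Ropp.
    right. f_equal. ring.
  - apply (dominated_inv_pow D W2 mode_weight (/ 2)); auto.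
    + intros; apply mode_weight_pos.
    + lra.
    + intros; now apply W2_between.
Qed.

Let g w := log_deriv (W2 w).

Lemma smooth_family_g : smooth_family D g.
Proof. intros w Dw. apply smooth_log_deriv; [now apply W2_smooth | intro; now apply W2_neq0]. Qed.

Let g' w := Derive (g w).

Lemma smooth_family_Derive_g : smooth_family D g'.
Proof. intros w Dw. apply smooth_Derive, smooth_family_g, Dw. Qed.

Lemma g_bounded : dominated D g (fun _ _ => 1).
Proof.
  apply dominated_ext with (fun w y => Derive_n (W2 w) 1 y * / W2 w y); [reflexivity|].
  apply (dominated_weaken D (fun w y => mode_weight w y * exp (alpha w * Rabs y)) _ _ 1).
  - intros w y _. apply Rmult_le_pos; left; apply exp_pos.
  - intros w y _. unfold mode_weight. rewrite <- exp_plus, Rmult_1_l.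
    replace (- alpha w * Rabs y + alpha w * Rabs y) with 0 by ring. rewrite exp_0; lra.
  - apply dominated_mult.
    + intros w y _. left; apply exp_pos.
    + intros w y _. left; apply exp_pos.
    + now apply smooth_family_Derive_n.
    + exact smooth_family_inv_W2.
    + now apply dominated_Derive_n.
    + exact inv_W2_dominated.
Qed.

Let h w y := - (1 - alpha w ^ 2) * ((W1 w y - W2 w y) * / W2 w y) + (- w) * Q4 w y.

Lemma smooth_family_h : smooth_family D h.
Proof.
  apply smooth_family_plus; apply smooth_family_scal; [|apply smooth_family_Q4, D_small].
  apply smooth_family_mult; [|exact smooth_family_inv_W2].
  intros w Dw. apply smooth_minus; auto.
Qed.

Lemma h_dominated : dominated D h target_weight.
Proof.
  apply dominated_plus.
  - apply smooth_family_scal, smooth_family_mult; [|exact smooth_family_inv_W2].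
    intros w Dw. apply smooth_minus; auto.
  - apply smooth_family_scal, smooth_family_Q4, D_small.
  - apply dominated_scal_bounded with 1; [exact target_weight_nonneg| |].
    + intros w Dw. destruct (alpha_bounds w Dw).
      rewrite Rabs_Ropp, Rabs_pos_eq; nra.
    + apply (dominated_weaken D (fun w y => gap_weight w y * exp (alpha w * Rabs y)) _ _ 1).
      * intros w y Dw. apply Rmult_le_pos; [|left; apply exp_pos].
        apply Rmult_le_pos; [apply Rlt_le, D_small, Dw | left; apply exp_pos].
      * intros w y _. unfold gap_weight, target_weight.
        rewrite Rmult_assoc, <- exp_plus, Rmult_1_l. right. do 2 f_equal. ring.
      * apply dominated_mult; auto.
        -- intros w y Dw. apply Rmult_le_pos; [apply Rlt_le, D_small, Dw | left; apply exp_pos].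
        -- intros w y _. left; apply exp_pos.
        -- intros w Dw. apply smooth_minus; auto.
        -- exact smooth_family_inv_W2.
        -- exact inv_W2_dominated.
  - apply dominated_ext with (fun w y => (-1 * w) * Q4 w y); [intros; ring|].
    apply dominated_w_decay, Q4_dominated, D_small.
Qed.

Lemma g_riccati w y : D w -> Derive (g w) y = alpha w ^ 2 - g w y * g w y + h w y.
Proof.
  intros Dw. assert (Heig := W2_eig w y Dw). unfold Mm_op in Heig.
  assert (Wpos := W2_pos w y Dw). assert (SW := W2_smooth w Dw).
  unfold g, h, log_deriv, Q4. apply is_derive_unique.
  set (d := Derive (W2 w)). auto_derive.
  - repeat split;
      [apply (smooth_ex_derive d), smooth_Derive; auto | now apply smooth_ex_derive | lra].
  - subst d. eta_contract. change (Derive (Derive (W2 w)) y) with (Derive_n (W2 w) 2 y).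
    replace (Derive_n (W2 w) 2 y)
      with (W2 w y - w * Q w y ^ 4 * W2 w y - (1 - alpha w ^ 2) * W1 w y) by lra.
    field. lra.
Qed.

Lemma W2_residual_bound : exists M, 0 <= M /\ forall w y, D w ->
  Rabs (Derive_n (W2 w) 2 y - alpha w ^ 2 * W2 w y) <= M * gap_weight w y.
Proof.
  destruct (dominated_0 _ _ _ W12_dominated) as [C12 H12].
  destruct (dominated_0 _ _ _ (Q4_dominated D D_small)) as [CP HP].
  assert (C12_pos := Rabs_pos C12). assert (CP_pos := Rabs_pos CP).
  exists (Rabs C12 + 2 * Rabs CP). split; [lra|]. intros w y Dw.
  destruct (alpha_bounds w Dw), (kappa_bounds w Dw), (D_small w Dw), (W2_between w y Dw).
  assert (Hy := Rabs_pos y).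
  assert (residual_eq : Derive_n (W2 w) 2 y - alpha w ^ 2 * W2 w y =
    - (1 - alpha w ^ 2) * (W1 w y - W2 w y) + - (w * Q4 w y * W2 w y)).
  { assert (Heig := W2_eig w y Dw). unfold Mm_op in Heig. unfold Q4. lra. }
  assert (gap_term : Rabs (- (1 - alpha w ^ 2) * (W1 w y - W2 w y))
                     <= Rabs C12 * gap_weight w y).
  { rewrite Rabs_mult, Rabs_Ropp, (Rabs_pos_eq (1 - alpha w ^ 2)) by nra.
    assert (gap_nonneg : 0 <= gap_weight w y)
      by (apply Rmult_le_pos; [lra | left; apply exp_pos]).
    assert (HW12 := Rabs_le_Rabs_const _ _ _ gap_nonneg (H12 w y Dw)).
    assert (0 <= Rabs (W1 w y - W2 w y)) by apply Rabs_pos. nra. }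
  assert (soliton_term : Rabs (w * Q4 w y * W2 w y) <= 2 * Rabs CP * gap_weight w y).
  { assert (HQ := Rabs_le_Rabs_const _ _ (exp (-4 * Rabs y))
      (Rlt_le _ _ (exp_pos _)) (HP w y Dw)).
    assert (decay : exp (-4 * Rabs y) * mode_weight w y <= exp (- kappa w * Rabs y)).
    { unfold mode_weight. rewrite <- exp_plus. apply exp_le_compat. nra. }
    assert (Hm := mode_weight_pos w y). assert (He := exp_pos (-4 * Rabs y)).
    assert (0 <= Rabs (Q4 w y)) by apply Rabs_pos.
    rewrite !Rabs_mult, (Rabs_pos_eq w), (Rabs_pos_eq (W2 w y)) by lra.
    unfold gap_weight.
    apply Rle_trans with (w * (Rabs CP * exp (-4 * Rabs y)) * (3 / 2 * mode_weight w y));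
      [apply Rmult_le_compat; try apply Rmult_le_compat_l; nra|].
    assert (w * Rabs CP * (exp (-4 * Rabs y) * mode_weight w y)
            <= w * Rabs CP * exp (- kappa w * Rabs y))
      by (apply Rmult_le_compat_l; [nra | exact decay]).
    assert (0 <= w * Rabs CP * exp (- kappa w * Rabs y))
      by (apply Rmult_le_pos; [nra | left; apply exp_pos]).
    nra. }
  rewrite residual_eq. eapply Rle_trans; [apply Rabs_triang|].
  rewrite Rabs_Ropp. lra.
Qed.

Lemma W2_slope_bound : exists B, forall w y, D w ->
  Rabs (Derive (W2 w) y + alpha w * W2 w y) <= B * mode_weight w y /\
  Rabs (- Derive (W2 w) y + alpha w * W2 w y) <= B * mode_weight w y.
Proof.
  destruct (W2_dominated 0%nat) as [C0 H0]. destruct (W2_dominated 1%nat) as [C1 H1].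
  exists (Rabs C1 + Rabs C0). intros w y Dw.
  assert (Hm := mode_weight_pos w y). destruct (alpha_bounds w Dw).
  assert (A1 := Rabs_le_Rabs_const _ _ _ (Rlt_le _ _ Hm) (H1 w y Dw)).
  assert (A0 := Rabs_le_Rabs_const _ _ _ (Rlt_le _ _ Hm) (H0 w y Dw)).
  change (Derive_n (W2 w) 1 y) with (Derive (W2 w) y) in A1. simpl in A0.
  assert (Rabs (alpha w * W2 w y) <= Rabs C0 * mode_weight w y).
  { rewrite Rabs_mult, Rabs_pos_eq by lra.
    assert (0 <= Rabs (W2 w y)) by apply Rabs_pos. nra. }
  split; (eapply Rle_trans; [apply Rabs_triang|]); rewrite ?Rabs_Ropp; lra.
Qed.

(* [W2] follows the decaying mode [exp (- alpha |y|)] of [- d^2 + alpha^2] up to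
   an error of the size of the forcing [W2'' - alpha^2 W2]. *)
Lemma W2_near_stable_mode : exists M, 0 <= M /\ forall w y, D w ->
  Rabs (Derive (W2 w) y + alpha w * W2 w y) <= M * gap_weight w y \/
  Rabs (- Derive (W2 w) y + alpha w * W2 w y) <= M * gap_weight w y.
Proof.
  destruct W2_residual_bound as [M [HM Hres]]. destruct W2_slope_bound as [B HB].
  exists M. split; [exact HM|]. intros w y Dw.
  destruct (alpha_bounds w Dw), (kappa_bounds w Dw), (D_small w Dw).
  unfold gap_weight. rewrite <- Rmult_assoc.
  apply (stable_mode_decay_two_sided (W2 w) (alpha w) (kappa w) (M * w) B);
    try lra; [apply Rmult_le_pos; lra | now apply W2_smooth | |].
  - intro t. rewrite Rmult_assoc. now apply Hres.
  - intro t. now apply HB.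
Qed.

Lemma log_deriv_W2_near_alpha : exists M, forall w y, D w ->
  Rabs (alpha w + g w y) <= M * target_weight w y \/
  Rabs (alpha w - g w y) <= M * target_weight w y.
Proof.
  destruct W2_near_stable_mode as [M [HM Hmode]].
  exists (2 * M). intros w y Dw.
  assert (Wpos := W2_pos w y Dw). destruct (W2_between w y Dw) as [Wlo _].
  assert (Hm := mode_weight_pos w y).
  assert (inv_W2 : / W2 w y <= 2 * exp (alpha w * Rabs y)).
  { replace (2 * exp (alpha w * Rabs y)) with (/ (/ 2 * mode_weight w y)).
    - apply Rinv_le_contravar; [lra | exact Wlo].
    - unfold mode_weight. rewrite Rinv_mult, Rinv_inv, <- exp_Ropp. f_equal. f_equal. ring. }
  assert (div : forall u, Rabs u <= M * gap_weight w y ->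
                  Rabs (u / W2 w y) <= 2 * M * target_weight w y).
  { intros u Hu. unfold Rdiv. rewrite Rabs_mult, (Rabs_pos_eq (/ W2 w y))
      by (left; apply Rinv_0_lt_compat, Wpos).
    replace (2 * M * target_weight w y)
      with (M * gap_weight w y * (2 * exp (alpha w * Rabs y))).
    - apply Rmult_le_compat; [apply Rabs_pos | left; apply Rinv_0_lt_compat, Wpos
        | exact Hu | exact inv_W2].
    - unfold gap_weight, target_weight.
      replace (- (kappa w - alpha w) * Rabs y) with (- kappa w * Rabs y + alpha w * Rabs y)
        by ring.
      rewrite exp_plus. ring. }
  unfold g, log_deriv. destruct (Hmode w y Dw) as [Hp|Hn]; [left|right].
  - replace (alpha w + Derive (W2 w) y / W2 w y)
      with ((Derive (W2 w) y + alpha w * W2 w y) / W2 w y) by (field; lra).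
    now apply div.
  - replace (alpha w - Derive (W2 w) y / W2 w y)
      with ((- Derive (W2 w) y + alpha w * W2 w y) / W2 w y) by (field; lra).
    now apply div.
Qed.

(* By the Riccati equation, [g' = (alpha + g) (alpha - g) + h], and one of the two
   factors is small. *)
Lemma Derive_g_bound : exists C, forall w y, D w ->
  Rabs (Derive (g w) y) <= C * target_weight w y.
Proof.
  destruct log_deriv_W2_near_alpha as [M HM].
  destruct (dominated_0 _ _ _ g_bounded) as [Cg Hg].
  destruct (dominated_0 _ _ _ h_dominated) as [Ch Hh].
  exists ((1 + Rabs Cg) * M + Rabs Ch). intros w y Dw.
  assert (sqr_diff : Rabs (alpha w ^ 2 - g w y * g w y)
                     <= (1 + Rabs Cg) * (M * target_weight w y)).
  { apply Rabs_sqr_diff_le; [now apply alpha_bounds| |now apply HM].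
    specialize (Hg w y Dw). cbv beta in Hg. rewrite Rmult_1_r in Hg.
    eapply Rle_trans; [exact Hg | apply Rle_abs]. }
  assert (h_bound := Rabs_le_Rabs_const _ _ _ (target_weight_nonneg w y Dw) (Hh w y Dw)).
  rewrite (g_riccati w y Dw). eapply Rle_trans; [apply Rabs_triang|]. nra.
Qed.

(* Differentiating the Riccati equation expresses [g^(k+2)] through [g^(j+1)],
   [j <= k], times the bounded [g], plus [h^(k+1)]. *)
Lemma Derive_g_dominated : dominated D g' target_weight.
Proof.
  enough (upto : forall k, dominated_upto D g' target_weight k) by (intro k; apply (upto k k); lia).
  induction k as [|k IH]; intros j Hj.
  - replace j with 0%nat by lia. exact Derive_g_bound.
  - destruct (Nat.le_gt_cases j k) as [Hjk|Hjk]; [now apply IH|].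
    replace j with (S k) by lia.
    destruct (dominated_upto_mult D target_weight (fun _ _ => 1) k target_weight_nonneg
      ltac:(intros w y _; cbv beta; lra) g' g smooth_family_Derive_g smooth_family_g IH
      (dominated_dominated_upto D g _ k g_bounded)) as [C HC].
    destruct (h_dominated (S k)) as [Ch HCh].
    exists (2 * Rabs C + Ch). intros w y Dw.
    unfold g'. rewrite (Derive_n_riccati (g w) (h w) (alpha w ^ 2)); [| now apply smooth_family_g
      | now apply smooth_family_h | intro t; now apply g_riccati].
    assert (Hprod := HC w y Dw). rewrite Rmult_1_r in Hprod.
    apply Rabs_le_Rabs_const in Hprod; [|now apply target_weight_nonneg].
    assert (Hh := HCh w y Dw).
    eapply Rle_trans; [apply Rabs_triang|]. rewrite Rabs_mult.
    replace (Rabs (-2)) with 2 by (rewrite Rabs_left; lra).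
    change (fun t => Derive (g w) t * g w t) with (fun t => g' w t * g w t). lra.
Qed.

Lemma dominated_target_bounded F : dominated D F target_weight ->
  dominated D F (fun _ _ => 1).
Proof.
  apply dominated_weaken with 1; [exact target_weight_nonneg|].
  intros w y Dw. rewrite Rmult_1_l. now apply target_weight_le_1.
Qed.


Lemma one_nonneg : nonneg_on D (fun _ _ => 1).
Proof. intros w y _. cbv beta. lra. Qed.

Lemma smooth_family_conj (K : R -> (R -> R) -> (R -> R) -> R -> R) :
  (forall w P g, smooth P -> smooth g -> smooth (K w P g)) ->
  smooth_family D (fun w => K w (Q4 w) (g w)).
Proof.
  intros HK w Dw. apply HK; [apply (smooth_family_Q4 D D_small) | apply smooth_family_g];
    exact Dw.
Qed.

Ltac smooth_family_tac :=
  repeat match goal with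
  | |- smooth_family _ (fun w _ => @?s w) => apply (smooth_family_const _ s)
  | |- smooth_family _ (fun w y => @?A w y + @?B w y) => apply (smooth_family_plus _ A B)
  | |- smooth_family _ (fun w y => @?A w y * @?B w y) => apply (smooth_family_mult _ A B)
  | |- smooth_family _ (fun w y => Derive_n (Q4 w) _ y) => apply (smooth_family_Derive_n _ Q4)
  | |- smooth_family _ (fun w y => Derive_n (g' w) _ y) => apply (smooth_family_Derive_n _ g')
  | |- smooth_family _ (fun w => Derive_n (Q4 w) _) => apply (smooth_family_Derive_n _ Q4)
  | |- smooth_family _ (fun w => Derive_n (g' w) _) => apply (smooth_family_Derive_n _ g')
  | |- smooth_family _ (fun w y => Q4 w y) => exact (smooth_family_Q4 D D_small)
  | |- smooth_family _ (fun w y => g w y) => exact smooth_family_g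
  | |- smooth_family _ (fun w y => g' w y) => exact smooth_family_Derive_g
  | |- smooth_family _ (fun w y => conj_b2 w (Q4 w) (g w) y) =>
      apply (smooth_family_conj conj_b2), smooth_conj_b2
  | |- smooth_family _ (fun w y => conj_K1 w (Q4 w) (g w) y) =>
      apply (smooth_family_conj conj_K1), smooth_conj_K1
  | |- smooth_family _ Q4 => exact (smooth_family_Q4 D D_small)
  | |- smooth_family _ g => exact smooth_family_g
  | |- smooth_family _ g' => exact smooth_family_Derive_g
  end.

Lemma K2_dominated : dominated D (fun w => conj_K2 w (Q4 w) (g w)) target_weight.
Proof.
  apply dominated_ext with (fun w y => (2 / 3 * w) * Q4 w y + 4 * g' w y);
    [intros; unfold conj_K2, g'; cbn [Derive_n]; eta_contract; field|].
  apply dominated_plus; [smooth_family_tac..| |].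
  - apply dominated_w_decay, Q4_dominated, D_small.
  - apply dominated_scal; [exact target_weight_nonneg | exact Derive_g_dominated].
Qed.

Lemma K1_dominated : dominated D (fun w => conj_K1 w (Q4 w) (g w)) target_weight.
Proof.
  apply dominated_ext with (fun w y => (8 / 3 * w) * Derive_n (Q4 w) 1 y
    + 6 * Derive_n (g' w) 1 y + 4 * (g w y * g' w y));
    [intros; unfold conj_K1, g'; cbn [Derive_n]; eta_contract; field|].
  repeat apply dominated_plus; [smooth_family_tac..| | |].
  - apply dominated_w_decay, (dominated_Derive_n D _ Q4 1), Q4_dominated, D_small.
  - apply dominated_scal; [exact target_weight_nonneg|].
    apply (dominated_Derive_n D _ g' 1), Derive_g_dominated.
  - apply dominated_scal; [exact target_weight_nonneg|].
    apply (dominated_mult_small D (fun _ _ => 1)); [exact one_nonneg | exact target_weight_nonneg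
      | intros; cbv beta; lra | smooth_family_tac.. | exact g_bounded | exact Derive_g_dominated].
Qed.

Lemma b2_bounded : dominated D (fun w => conj_b2 w (Q4 w) (g w)) (fun _ _ => 1).
Proof.
  apply dominated_ext with (fun w y => -2 + (2 / 3 * w) * Q4 w y + 4 * g' w y);
    [intros; unfold conj_b2, g'; cbn [Derive_n]; eta_contract; field|].
  repeat apply dominated_plus; [smooth_family_tac..| | |].
  - apply dominated_const.
  - apply dominated_target_bounded, dominated_w_decay, Q4_dominated, D_small.
  - apply dominated_scal; [exact one_nonneg|].
    apply dominated_target_bounded, Derive_g_dominated.
Qed.

Lemma Q4_sqr_dominated : dominated D (fun w y => w * (Q4 w y * Q4 w y)) e4.
Proof.
  apply dominated_scal_bounded with 1; [exact e4_nonneg| |].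
  - intros w Dw. destruct (D_small w Dw). rewrite Rabs_pos_eq; lra.
  - apply (dominated_mult_small D e4); [exact e4_nonneg | exact e4_nonneg
      | intros; apply e4_le_1 | smooth_family_tac..
      | apply Q4_dominated, D_small | apply Q4_dominated, D_small].
Qed.

Lemma K0_dominated : dominated D (fun w => conj_K0 w (Q4 w) (g w)) target_weight.
Proof.
  apply dominated_ext with (fun w y =>
    (3 * w) * Derive_n (Q4 w) 2 y + (- (2 / 3) * w) * Q4 w y
    + (- (1 / 3) * w) * (w * (Q4 w y * Q4 w y))
    + (-2 * w) * (g w y * Derive_n (Q4 w) 1 y) + 4 * Derive_n (g' w) 2 y
    + 2 * (conj_b2 w (Q4 w) (g w) y * g' w y) + g w y * conj_K1 w (Q4 w) (g w) y).
  { intros. unfold conj_K0, conj_a0, conj_b2, conj_K1, g'. cbn [Derive_n]. eta_contract. field. }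
  repeat apply dominated_plus; [smooth_family_tac..| | | | | | |].
  - apply dominated_w_decay, (dominated_Derive_n D _ Q4 2), Q4_dominated, D_small.
  - apply dominated_w_decay, Q4_dominated, D_small.
  - apply dominated_w_decay, Q4_sqr_dominated.
  - apply dominated_w_decay, (dominated_mult_small D (fun _ _ => 1));
      [exact one_nonneg | exact e4_nonneg | intros; cbv beta; lra | smooth_family_tac..
      | exact g_bounded | apply (dominated_Derive_n D _ Q4 1), Q4_dominated, D_small].
  - apply dominated_scal; [exact target_weight_nonneg|].
    apply (dominated_Derive_n D _ g' 2), Derive_g_dominated.
  - apply dominated_scal; [exact target_weight_nonneg|].
    apply (dominated_mult_small D (fun _ _ => 1)); [exact one_nonneg
      | exact target_weight_nonneg | intros; cbv beta; lra | smooth_family_tac..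
      | exact b2_bounded | exact Derive_g_dominated].
  - apply (dominated_mult_small D (fun _ _ => 1)); [exact one_nonneg
      | exact target_weight_nonneg | intros; cbv beta; lra | smooth_family_tac..
      | exact g_bounded | exact K1_dominated].
Qed.

Lemma W2_eigenfunction w y : D w ->
  Mp_P w (Q4 w) (Mm_P w (Q4 w) (W2 w)) y = (1 - alpha w ^ 2) ^ 2 * W2 w y.
Proof.
  intros Dw. change (Mm_P w (Q4 w) (W2 w)) with (Mm_op w (W2 w)).
  rewrite (functional_extensionality _ _ (fun t => W2_eig w t Dw)).
  transitivity ((1 - alpha w ^ 2) * Mp_op w (W1 w) y).
  - unfold Mp_P, Mp_op, Q4. rewrite Derive_n_scal_l. ring.
  - rewrite (W1_eig w y Dw). ring.
Qed.

Theorem conjugated_operator : exists C : nat -> R, forall w, D w ->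
  exists K2 K1 K0 : R -> R, smooth K2 /\ smooth K1 /\ smooth K0 /\
    (forall f, smooth f -> forall y,
       Uop (W2 w) (Mp_op w (Mm_op w f)) y = Kop K2 K1 K0 (Uop (W2 w) f) y) /\
    (forall k y, Rabs (Derive_n K2 k y) + Rabs (Derive_n K1 k y) + Rabs (Derive_n K0 k y)
                 <= C k * target_weight w y).
Proof.
  destruct (dominated_choice _ _ _ K2_dominated) as [C2 H2].
  destruct (dominated_choice _ _ _ K1_dominated) as [C1 H1].
  destruct (dominated_choice _ _ _ K0_dominated) as [C0 H0].
  exists (fun k => C2 k + C1 k + C0 k). intros w Dw.
  exists (conj_K2 w (Q4 w) (g w)), (conj_K1 w (Q4 w) (g w)), (conj_K0 w (Q4 w) (g w)).
  repeat split; try (apply smooth_family_conj; auto using smooth_conj_K2, smooth_conj_K1,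
    smooth_conj_K0).
  - apply (conjugation_identity w (Q4 w) (W2 w) ((1 - alpha w ^ 2) ^ 2)).
    + exact (smooth_family_Q4 D D_small w Dw).
    + now apply W2_smooth.
    + intro t. now apply W2_neq0.
    + intro t. now apply W2_eigenfunction.
  - intros k y. specialize (H2 k w y Dw). specialize (H1 k w y Dw). specialize (H0 k w y Dw).
    lra.
Qed.

End InternalMode.

Lemma Derive_n_pder_y (W : R -> R -> R) w n y :
  Derive_n (W w) n y = pder (repeat false n) W w y.
Proof.
  revert y; induction n as [|n IH]; intro y; [reflexivity|].
  simpl. apply Derive_ext. intro t. apply IH.
Qed.

Lemma smooth2_on_smooth w1 W w : smooth2_on w1 W -> 0 < w < w1 -> smooth (W w).
Proof.
  intros H Hw n y. apply ex_derive_ext with (fun y' => pder (repeat false n) W w y').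
  - intro t. symmetry. apply Derive_n_pder_y.
  - apply (H (repeat false n) w y Hw).
Qed.

Lemma small_parameter w1 c1 c2 : 0 < w1 -> exists w0, 0 < w0 /\ w0 <= w1 /\
  forall w, 0 < w < w0 -> w <= 1 / 2 /\ Rabs c1 * w <= 1 / 2 /\ Rabs c2 * w <= 1 / 2.
Proof.
  intros Hw1. assert (H1 := Rabs_pos c1). assert (H2 := Rabs_pos c2).
  set (c := Rabs c1 + Rabs c2 + 1).
  exists (Rmin w1 (/ (2 * c))).
  split; [apply Rmin_glb_lt; [lra | apply Rinv_0_lt_compat; unfold c; lra]|].
  split; [apply Rmin_l|]. intros w [Hw Hw0].
  assert (Hsmall : w * (2 * c) < 1).
  { apply Rlt_le_trans with (/ (2 * c) * (2 * c)).
    - apply Rmult_lt_compat_r; [unfold c; lra|].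
      eapply Rlt_le_trans; [exact Hw0 | apply Rmin_r].
    - rewrite Rinv_l; unfold c; lra. }
  unfold c in Hsmall. repeat split; nra.
Qed.

Lemma alpha_le_1 a C w : 0 < w <= 1 / 2 -> Rabs C * w <= 1 / 2 ->
  Rabs (a - 8 / 9 * w) <= C * w ^ 2 -> a <= 1.
Proof.
  intros Hw HC Ha. apply Rabs_le_between in Ha.
  assert (C * w ^ 2 <= Rabs C * w * w) by (simpl; assert (C <= Rabs C) by apply Rle_abs; nra).
  nra.
Qed.

Lemma between_of_relative_error x e C w : 0 < e -> 0 <= w -> Rabs C * w <= 1 / 2 ->
  Rabs (x - e) <= C * w * e -> / 2 * e <= x <= 3 / 2 * e.
Proof.
  intros He Hw HC Hx. apply Rabs_le_between in Hx.
  assert (C * w * e <= / 2 * e) by (apply Rmult_le_compat_r; [lra|];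
    assert (C <= Rabs C) by apply Rle_abs; nra).
  lra.
Qed.

Lemma internal_mode_dominated (D : R -> Prop) (alpha : R -> R) (W : R -> R -> R) :
  (forall w, D w -> 0 < w <= 1 /\ 0 < alpha w <= 1) ->
  (forall k, exists C, forall w y, D w ->
     Rabs (Derive_n (W w) k y) <= C * (w ^ k * exp (- alpha w * Rabs y) + w * exp (- Rabs y))) ->
  dominated D W (mode_weight alpha).
Proof.
  intros HD HW k. destruct (HW k) as [C HC]. exists (2 * Rabs C). intros w y Dw.
  destruct (HD w Dw) as [Hw Ha].
  assert (wk : w ^ k <= 1) by (rewrite <- (pow1 k); apply pow_incr; lra).
  assert (wk0 : 0 <= w ^ k) by (apply pow_le; lra).
  assert (slow : exp (- Rabs y) <= mode_weight alpha w y).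
  { apply exp_le_compat. assert (0 <= Rabs y) by apply Rabs_pos. nra. }
  assert (E1 := exp_pos (- Rabs y)). assert (E2 := mode_weight_pos alpha w y).
  assert (sum : w ^ k * mode_weight alpha w y + w * exp (- Rabs y) <= 2 * mode_weight alpha w y)
    by nra.
  eapply Rle_trans; [apply (HC w y Dw)|].
  apply Rle_trans with (Rabs C * (w ^ k * mode_weight alpha w y + w * exp (- Rabs y))).
  - apply Rmult_le_compat_r; [unfold mode_weight in *; nra | apply Rle_abs].
  - replace (2 * Rabs C * mode_weight alpha w y) with (Rabs C * (2 * mode_weight alpha w y))
      by ring.
    apply Rmult_le_compat_l; [apply Rabs_pos | exact sum].
Qed.

Theorem lemma3
  (w1 : R) (alpha : R -> R) (W1 W2 : R -> R -> R)
  (Hw1 : 0 < w1)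
  (Halpha_smooth : smooth_on_interval w1 alpha)
  (Halpha_pos : forall w, 0 < w < w1 -> 0 < alpha w)
  (Halpha_asym : exists C, forall w, 0 < w < w1 ->
      Rabs (alpha w - 8 / 9 * w) <= C * w ^ 2)
  (HW1_smooth : smooth2_on w1 W1)
  (HW2_smooth : smooth2_on w1 W2)
  (HW1_even : forall w y, 0 < w < w1 -> W1 w (- y) = W1 w y)
  (HW2_even : forall w y, 0 < w < w1 -> W2 w (- y) = W2 w y)
  (Heig1 : forall w y, 0 < w < w1 ->
      Mp_op w (W1 w) y = (1 - alpha w ^ 2) * W2 w y)
  (Heig2 : forall w y, 0 < w < w1 ->
      Mm_op w (W2 w) y = (1 - alpha w ^ 2) * W1 w y)
  (HW1_bd : forall k : nat, exists C, forall w y, 0 < w < w1 ->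
      Rabs (Derive_n (W1 w) k y)
        <= C * (w ^ k * exp (- alpha w * Rabs y) + w * exp (- Rabs y)))
  (HW2_bd : forall k : nat, exists C, forall w y, 0 < w < w1 ->
      Rabs (Derive_n (W2 w) k y)
        <= C * (w ^ k * exp (- alpha w * Rabs y) + w * exp (- Rabs y)))
  (HW12_bd : forall k : nat, exists C, forall w y, 0 < w < w1 ->
      Rabs (Derive_n (fun z => W1 w z - W2 w z) k y)
        <= C * w * exp (- sqrt (2 - alpha w ^ 2) * Rabs y))
  (HW1_app : exists C, forall w y, 0 < w < w1 ->
      Rabs (W1 w y - exp (- alpha w * Rabs y)) <= C * w * exp (- alpha w * Rabs y))
  (HW2_app : exists C, forall w y, 0 < w < w1 ->
      Rabs (W2 w y - exp (- alpha w * Rabs y)) <= C * w * exp (- alpha w * Rabs y)) :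
  exists w0 : R, 0 < w0 /\ w0 <= w1 /\
  exists C : nat -> R,
  forall w : R, 0 < w < w0 ->
  exists K2 K1 K0 : R -> R,
    smooth K2 /\ smooth K1 /\ smooth K0 /\
    (forall f : R -> R, smooth f -> forall y : R,
        Uop (W2 w) (Mp_op w (Mm_op w f)) y = Kop K2 K1 K0 (Uop (W2 w) f) y) /\
    (forall (k : nat) (y : R),
        Rabs (Derive_n K2 k y) + Rabs (Derive_n K1 k y) + Rabs (Derive_n K0 k y)
          <= C k * w * exp (- (sqrt (2 - alpha w ^ 2) - alpha w) * Rabs y)).
Proof.
  destruct Halpha_asym as [Ca HCa]. destruct HW2_app as [CA HCA].
  destruct (small_parameter w1 Ca CA Hw1) as [w0 [Hw0 [Hw0_le Hsmall]]].
  assert (D_w1 : forall w, 0 < w < w0 -> 0 < w < w1) by (intros; lra).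
  assert (alpha_bounds : forall w, 0 < w < w0 -> 0 < alpha w <= 1).
  { intros w Dw. destruct (Hsmall w Dw) as [Hw [HCa_w _]]. split; [now apply Halpha_pos, D_w1|].
    apply (alpha_le_1 _ Ca w); [lra | exact HCa_w | now apply HCa, D_w1]. }
  destruct (conjugated_operator (fun w => 0 < w < w0) alpha W1 W2) as [C HC].
  - intros w Dw. destruct (Hsmall w Dw). lra.
  - exact alpha_bounds.
  - intros w Dw. now apply (smooth2_on_smooth w1), D_w1.
  - intros w Dw. now apply (smooth2_on_smooth w1), D_w1.
  - intros w y Dw. now apply Heig1, D_w1.
  - intros w y Dw. now apply Heig2, D_w1.
  - apply internal_mode_dominated.
    + intros w Dw. destruct (Hsmall w Dw). split; [lra | now apply alpha_bounds].
    + intro k. destruct (HW2_bd k) as [C HC]. exists C. intros w y Dw. now apply HC, D_w1.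
  - intro k. destruct (HW12_bd k) as [C HC]. exists C. intros w y Dw.
    unfold gap_weight, kappa. rewrite <- Rmult_assoc. now apply HC, D_w1.
  - intros w y Dw. destruct (Hsmall w Dw) as [_ [_ HCA_w]].
    apply (between_of_relative_error _ _ CA w); [apply exp_pos | lra | exact HCA_w|].
    now apply HCA, D_w1.
  - exists w0. split; [exact Hw0|]. split; [exact Hw0_le|]. exists C.
    intros w Dw. destruct (HC w Dw) as (K2 & K1 & K0 & HK2 & HK1 & HK0 & Hid & Hbound).
    exists K2, K1, K0. repeat split; auto.
    intros k y. rewrite Rmult_assoc. apply Hbound.
Qed.
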